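(* Let $0<\varepsilon\le 1/2$, let $X\subset\mathbb{R}^d$ be a finite nonempty (multi)set with $n=|X|$, and $C\subset\mathbb{R}^d$ a finite nonempty set. Define $R\ge0$ by $R^2 = \frac{\varepsilon^2}{41}\cdot\frac{\Phi(C,X)}{n}$, let $X^{near} = \{x\in X: \min_{c\in C}\|x-c\|\le R\}$ and $\bar n = |X^{near}|$. Then $\Delta(X)\ge\frac{16\,\bar n}{\varepsilon^2}R^2$.
   Context: $\mu(Y)$ denotes the centroid of a finite multiset $Y$, $\Delta(Y)=\sum_{y\in Y}\|y-\mu(Y)\|^2$, and $\Phi(C,Y)=\sum_{y\in Y}\min_{c\in C}\|y-c\|^2$. *)

(* Points of R^d are row vectors 'rV[R]_d over a real closed field. *)
From HB Require Import structures.
From mathcomp Require Import all_boot all_order all_algebra.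
Set Implicit Arguments. Unset Strict Implicit. Unset Printing Implicit Defensive.
Import Order.TTheory GRing.Theory Num.Theory.
Local Open Scope ring_scope.

Definition enorm (R : rcfType) (d : nat) (x : 'rV[R]_d) : R :=
  Num.sqrt (\sum_(i < d) x 0 i ^+ 2).

(* centroid mu(Y) of a finite multiset Y (a seq) *)
Definition centroid (R : rcfType) (d : nat) (Y : seq 'rV[R]_d) : 'rV[R]_d :=
  (size Y)%:R^-1 *: \sum_(y <- Y) y.

Definition Delta (R : rcfType) (d : nat) (Y : seq 'rV[R]_d) : R :=
  \sum_(y <- Y) enorm (y - centroid Y) ^+ 2.

(* min_{c in C} ||x - c||, for nonempty C (the initial value is the value
   at an element of C, so it does not affect the minimum) *)
Definition distC (R : rcfType) (d : nat) (C : seq 'rV[R]_d) (x : 'rV[R]_d) : R :=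
  \big[Num.min/enorm (x - head 0 C)]_(c <- C) enorm (x - c).

Definition sqdistC (R : rcfType) (d : nat) (C : seq 'rV[R]_d) (x : 'rV[R]_d) : R :=
  \big[Num.min/enorm (x - head 0 C) ^+ 2]_(c <- C) enorm (x - c) ^+ 2.

Definition Phi (R : rcfType) (d : nat) (C Y : seq 'rV[R]_d) : R :=
  \sum_(y <- Y) sqdistC C y.

(* Let mu be the centroid of X, n = |X|, and T the squared distance from mu to
   its nearest center.  Recentring at that center gives Phi(C,X) <= Delta(X) + n T.
   For a point x within Rad of its center c_x, the inequality
   4 ||mu - c_x||^2 <= 5 ||x - mu||^2 + 20 Rad^2 with ||mu - c_x||^2 >= T gives
   nbar (4 T - 20 Rad^2) <= 5 Delta(X).  Finally eps <= 1/2 gives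
   164 n Rad^2 <= Phi(C,X).  Eliminating T from these three inequalities,
   according to whether T is large or small compared with Rad^2, yields
   16 nbar Phi(C,X) <= 41 n Delta(X), which is the claim. *)
From HB Require Import structures.
From mathcomp Require Import all_boot all_order all_algebra.
From mathcomp Require Import ring lra.
Import Order.TTheory GRing.Theory Num.Theory.
Local Open Scope ring_scope.

Lemma bigmin_seq_attained {disp : Order.disp_t} {T : orderType disp}
    {I : eqType} (F : I -> T) (s : seq I) (i0 : I) :
  s != [::] ->
  exists2 i, i \in s & \big[Order.min/F (head i0 s)]_(j <- s) F j = F i.
Proof.
case: s => [//|i s] _ /=; rewrite big_cons.
have [j js ->] : exists2 j, (j == i) || (j \in s) &
    \big[Order.min/F i]_(k <- s) F k = F j.
  elim: s => [|k r [j jr IH]]; first by exists i; rewrite ?big_nil ?eqxx.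
  rewrite big_cons /Order.min; case: ifP => _; first by exists k; rewrite ?mem_head ?orbT.
  by exists j; rewrite // in_cons orbCA jr orbT.
rewrite /Order.min; case: ifP => _; first by exists i; rewrite ?mem_head.
by exists j.
Qed.

Lemma sumr_filter_le (R : numDomainType) (T : Type) (s : seq T) (P : pred T)
    (F : T -> R) :
  (forall x, 0 <= F x) -> \sum_(x <- [seq x <- s | P x]) F x <= \sum_(x <- s) F x.
Proof.
move=> F_ge0; rewrite big_filter big_mkcond /=.
by apply: ler_sum => x _; case: (P x).
Qed.

Section Euclidean.
Context {R : rcfType} {d : nat}.
Implicit Types (a b c x : 'rV[R]_d) (X C : seq 'rV[R]_d).

Definition sqnorm (v : 'rV[R]_d) : R := \sum_(i < d) v 0 i ^+ 2.

Lemma sqnorm_ge0 v : 0 <= sqnorm v.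
Proof. by apply: sumr_ge0 => i _; apply: sqr_ge0. Qed.

Lemma enorm_sqr v : enorm v ^+ 2 = sqnorm v.
Proof. by rewrite /enorm sqr_sqrtr // sqnorm_ge0. Qed.

Lemma sqnormN v : sqnorm (- v) = sqnorm v.
Proof. by apply: eq_bigr => i _; rewrite mxE sqrrN. Qed.

(* Coordinatewise, the gap between the two sides is (a_i - s b_i)^2. *)
Lemma sqnormD_le (s : R) a b :
  s * sqnorm (a + b) <= (s + 1) * sqnorm a + s * (s + 1) * sqnorm b.
Proof.
rewrite /sqnorm !mulr_sumr -big_split; apply: ler_sum => i _ /=; rewrite mxE.
by have := sqr_ge0 (a 0 i - s * b 0 i); nra.
Qed.

Lemma sumrB_centroid X : \sum_(x <- X) (x - centroid X) = 0.
Proof.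
case: X => [|x0 X]; first by rewrite big_nil.
rewrite sumrB big_const_seq count_predT iter_addr_0 /centroid.
by rewrite -scaler_nat scalerA mulfV ?scale1r ?subrr ?pnatr_eq0.
Qed.

Lemma sum_sqnormB_centroid X c :
  \sum_(x <- X) sqnorm (x - c) =
  \sum_(x <- X) sqnorm (x - centroid X) + (size X)%:R * sqnorm (centroid X - c).
Proof.
set mu := centroid X.
have expand x : sqnorm (x - c) = sqnorm (x - mu) + sqnorm (mu - c)
    + 2%:R * \sum_(i < d) (x - mu) 0 i * (mu - c) 0 i.
  by rewrite /sqnorm mulr_sumr -!big_split /=; apply: eq_bigr => i _; rewrite !mxE; ring.
under eq_bigr do rewrite expand.
rewrite !big_split /= big_const_seq count_predT iter_addr_0 mulr_natl.
rewrite -mulr_sumr [X in 2%:R * X]exchange_big [X in 2%:R * X]big1 ?mulr0 ?addr0 //.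
by move=> i _; rewrite -mulr_suml -summxE sumrB_centroid mxE mul0r.
Qed.

Lemma Delta_sqnorm X : Delta X = \sum_(x <- X) sqnorm (x - centroid X).
Proof. by apply: eq_bigr => x _; rewrite enorm_sqr. Qed.

Lemma sqdistC_le C x c : c \in C -> sqdistC C x <= sqnorm (x - c).
Proof. by move=> cC; rewrite -enorm_sqr; apply: ge_bigmin_seq. Qed.

Lemma sqdistC_attained C x :
  C != [::] -> exists2 c, c \in C & sqdistC C x = sqnorm (x - c).
Proof.
move=> CN; have [c cC eq_c] := bigmin_seq_attained (fun c => enorm (x - c) ^+ 2) C 0 CN.
by exists c; rewrite // /sqdistC eq_c enorm_sqr.
Qed.

Lemma distC_attained C x :
  C != [::] -> exists2 c, c \in C & distC C x = enorm (x - c).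
Proof. exact: (bigmin_seq_attained (fun c => enorm (x - c))). Qed.

Lemma Delta_ge0 X : 0 <= Delta X.
Proof. by rewrite Delta_sqnorm sumr_ge0 // => x _; apply: sqnorm_ge0. Qed.

Lemma Phi_ge0 C X : C != [::] -> 0 <= Phi C X.
Proof.
move=> CN; apply: sumr_ge0 => x _.
by have [c _ ->] := sqdistC_attained _ x CN; apply: sqnorm_ge0.
Qed.

Lemma Phi_le_Delta C X :
  C != [::] -> Phi C X <= Delta X + (size X)%:R * sqdistC C (centroid X).
Proof.
move=> CN; have [c cC ->] := sqdistC_attained _ (centroid X) CN.
rewrite Delta_sqnorm -sum_sqnormB_centroid.
by apply: ler_sum => x _; exact: sqdistC_le.
Qed.

Lemma near_size_le_Delta C X [Rad : R] :
  C != [::] -> 0 <= Rad ->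
  (size [seq x <- X | distC C x <= Rad])%:R
    * (4%:R * sqdistC C (centroid X) - 20%:R * Rad ^+ 2) <= 5%:R * Delta X.
Proof.
move=> CN Rad_ge0; set mu := centroid X.
set Xnear := [seq x <- X | _]; set k := _ - _.
have -> : (size Xnear)%:R * k = \sum_(x <- Xnear) k.
  by rewrite big_const_seq count_predT iter_addr_0 mulr_natl.
rewrite Delta_sqnorm -/mu mulr_sumr.
apply: (@le_trans _ _ (\sum_(x <- Xnear) 5%:R * sqnorm (x - mu))).
  2: by apply: sumr_filter_le => x; rewrite mulr_ge0 ?ler0n ?sqnorm_ge0.
rewrite big_seq [leRHS]big_seq; apply: ler_sum => x; rewrite mem_filter.
case/andP => near_x _; have [cx cxC dist_x] := distC_attained _ x CN.
have x_cx : sqnorm (x - cx) <= Rad ^+ 2.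
  by rewrite -enorm_sqr lerXn2r ?nnegrE ?sqrtr_ge0 // -dist_x.
have := sqdistC_le C mu cx cxC; have := sqnormD_le 4%:R (mu - x) (x - cx).
by rewrite addrA subrK -[mu - x]opprB sqnormN /k; lra.
Qed.

End Euclidean.

Lemma sqr_radius_le {R : realFieldType} [eps n P Rad : R] :
  0 < eps -> eps <= 2^-1 -> 0 < n -> 0 <= P ->
  Rad ^+ 2 = eps ^+ 2 / 41%:R * (P / n) -> 164%:R * n * Rad ^+ 2 <= P.
Proof.
move=> eps_gt0 eps_le n_gt0 P_ge0 ->.
have -> : 164%:R * n * (eps ^+ 2 / 41%:R * (P / n)) = 4%:R * eps ^+ 2 * P.
  by field; rewrite gt_eqF.
have : 4%:R * eps ^+ 2 <= 1 by nra.
nra.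
Qed.

(* If T >= 25 Q the second bound controls nbar T by D; otherwise the third
   bound makes n T at most a small multiple of D. *)
Lemma eliminate_center_dist {R : realFieldType} [n nbar P D T Q : R] :
  0 < n -> 0 <= nbar <= n -> 0 <= D ->
  P <= D + n * T -> nbar * (4%:R * T - 20%:R * Q) <= 5%:R * D ->
  164%:R * n * Q <= P ->
  16%:R * nbar * P <= 41%:R * n * D.
Proof.
move=> n_gt0 /andP[nbar_ge0 nbar_le] D_ge0 PD DT QP.
have nbarD : 16%:R * nbar * D <= 16%:R * n * D by nra.
have [T_large | T_small] := lerP (25%:R * Q) T.
  have : 16%:R * nbar * T <= 25%:R * D by nra.
  nra.
have nT : n * T <= D by nra.
nra.
Qed.

Theorem mainTheorem9 (R : rcfType) (d : nat) (eps : R)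
    (X C : seq 'rV[R]_d) (Rad : R) :
  0 < eps -> eps <= 2^-1 ->
  X != [::] -> C != [::] ->
  0 <= Rad ->
  Rad ^+ 2 = eps ^+ 2 / 41%:R * (Phi C X / (size X)%:R) ->
  let Xnear := [seq x <- X | distC C x <= Rad] in
  16%:R * (size Xnear)%:R / eps ^+ 2 * Rad ^+ 2 <= Delta X.
Proof.
move=> eps_gt0 eps_le XN CN Rad_ge0 Rad_def /=; set Xnear := [seq x <- X | _].
have n_gt0 : 0 < (size X)%:R :> R by rewrite ltr0n lt0n size_eq0.
have near_le : 0 <= ((size Xnear)%:R : R) <= (size X)%:R.
  by rewrite ler0n ler_nat size_filter count_size.
have := eliminate_center_dist n_gt0 near_le (Delta_ge0 X)
  (Phi_le_Delta C X CN) (near_size_le_Delta C X CN Rad_ge0)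
  (sqr_radius_le eps_gt0 eps_le n_gt0 (Phi_ge0 C X CN) Rad_def).
have -> : 16%:R * (size Xnear)%:R / eps ^+ 2 * Rad ^+ 2 =
    16%:R * (size Xnear)%:R * Phi C X / (41%:R * (size X)%:R).
  by rewrite Rad_def; field; rewrite ?gt_eqF ?pnatr_eq0 ?expf_eq0 ?gt_eqF.
by rewrite ler_pdivrMr ?mulr_gt0 // [leRHS]mulrC.
Qed.
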